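(* Each of $P_3$, $P_4$ and $C_4$ is $T_1$-Tur\'an-good; that is, for each $H\in\{P_3,P_4,C_4\}$ there is $n_0$ such that $\mathrm{ex}(n,H,T_1)=\mathcal{N}(H,T_2(n))$ for all $n\ge n_0$.
   Context: $P_k$ is the path on $k$ vertices, $C_4$ the cycle on $4$ vertices, and $T_1$ (the paw) is the graph consisting of a triangle and one further vertex joined to exactly one vertex of the triangle. $T_2(n)$ is the complete bipartite graph on $n$ vertices with parts of sizes $\lfloor n/2\rfloor$ and $\lceil n/2\rceil$. For graphs $H,G$, $\mathcal{N}(H,G)$ is the number of subgraphs of $G$ isomorphic to $H$, and $\mathrm{ex}(n,H,F)$ is the maximum of $\mathcal{N}(H,G)$ over $F$-free graphs $G$ on $n$ vertices. *)

(* Simple graphs are symmetric irreflexive boolean relations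
   on a finite vertex type. *)
From mathcomp Require Import all_boot all_order.
Set Implicit Arguments. Unset Strict Implicit. Unset Printing Implicit Defensive.

Definition edges (V : finType) (g : rel V) : {set {set V}} :=
  [set [set x; y] | x in V, y in V & g x y].

Section Graphs.
Variables (U V : finType).


(* (S, F) is a subgraph of G (vertex set S, edge set F) isomorphic to H:
   F is a set of edges of G, and some bijection f : V(H) -> S maps the
   edge set of H exactly onto F. *)
Definition is_copy (h : rel U) (g : rel V) (p : {set V} * {set {set V}}) : bool :=
  (p.2 \subset edges g) &&
  [exists f : {ffun U -> V},
     [&& injectiveb f, f @: [set: U] == p.1 &
         [set f @: (A : {set U}) | A in edges h] == p.2]].

Definition Nsub (h : rel U) (g : rel V) : nat :=
  #|[set p : {set V} * {set {set V}} | is_copy h g p]|.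

End Graphs.

Definition grel n (G : {ffun 'I_n * 'I_n -> bool}) : rel 'I_n :=
  fun x y => G (x, y).

Definition simpleb n (G : {ffun 'I_n * 'I_n -> bool}) : bool :=
  [forall x, forall y, G (x, y) == G (y, x)] && [forall x, ~~ G (x, x)].

Definition exN (U W : finType) (n : nat) (h : rel U) (f : rel W) : nat :=
  \max_(G : {ffun 'I_n * 'I_n -> bool} | simpleb G && (Nsub f (grel G) == 0))
     Nsub h (grel G).

Definition P3 : rel 'I_3 := fun i j => (i.+1 == j :> nat) || (j.+1 == i :> nat).
Definition P4 : rel 'I_4 := fun i j => (i.+1 == j :> nat) || (j.+1 == i :> nat).
Definition C4 : rel 'I_4 := fun i j =>
  [|| i.+1 == j :> nat, j.+1 == i :> nat,
      (i == 0 :> nat) && (j == 3 :> nat) | (i == 3 :> nat) && (j == 0 :> nat)].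
(* T1 (paw): triangle 0,1,2 plus vertex 3 adjacent to 0 only *)
Definition paw : rel 'I_4 := fun i j =>
  (i != j) && (((i < 3) && (j < 3)) || ((i == 0 :> nat) && (j == 3 :> nat))
                || ((i == 3 :> nat) && (j == 0 :> nat))).

Definition T2 (n : nat) : rel 'I_n := fun i j => (i < n./2) != (j < n./2).
Arguments T2 n%_nat_scope _ _ : clear implicits.

(* Count labelled copies (edge-preserving injections) instead of subgraphs:
   every copy of H is the image of exactly |Aut H| of them.  In a paw-free graph
   a vertex on a triangle has degree at most 2, so d(x) + d(y) <= n on every
   edge xy once n >= 4.  This inequality alone gives 2 Σ d² <= n Σ d and, with
   Cauchy-Schwarz, Mantel's bound Σ d <= 2⌊n/2⌋⌈n/2⌉.  Hence the labelled P3's,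
   counted by Σ d(d-1), number at most (n-2)⌊n/2⌋⌈n/2⌉.  Labelled P4's and C4's
   are non-backtracking walks x0 x1 x2 x3, counted by Σ (d(x1)-1)(d(x2)-1) over
   the oriented edges x1 x2, and each product is at most (⌊n/2⌋-1)(⌈n/2⌉-1).
   T2(n) is triangle-free and attains all these bounds. *)

From Pilot Require Import Defs.
From mathcomp Require Import all_boot all_order zify.
Set Implicit Arguments. Unset Strict Implicit. Unset Printing Implicit Defensive.

Section Embeddings.
Variables (U V : finType) (h : rel U) (g : rel V).

Definition embeddings : {set {ffun U -> V}} :=
  [set f : {ffun U -> V} |
     injectiveb f && ([set f @: (A : {set U}) | A in edges h] \subset edges g)].

Definition copy_of (f : {ffun U -> V}) : {set V} * {set {set V}} :=
  (f @: [set: U], [set f @: (A : {set U}) | A in edges h]).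

Lemma copy_of_embedding f : f \in embeddings -> is_copy h g (copy_of f).
Proof.
rewrite inE => /andP[injf sub]; rewrite /is_copy sub /=.
by apply/existsP; exists f; rewrite injf !eqxx.
Qed.

Lemma is_copy_embedding p :
  is_copy h g p -> exists2 f, f \in embeddings & p = copy_of f.
Proof.
case/andP=> sub /existsP[f /and3P[injf /eqP e1 /eqP e2]].
exists f; first by rewrite inE injf e2 sub.
by rewrite /copy_of e1 e2; case: p {e1 e2 sub}.
Qed.

End Embeddings.

Lemma imset_edges_comp (U V : finType) (h : rel U) (s : U -> U) (f : U -> V) :
  [set (fun u => f (s u)) @: (A : {set U}) | A in edges h] =
  [set f @: (B : {set U}) | B in [set s @: (A : {set U}) | A in edges h]].
Proof. by rewrite -imset_comp; apply: eq_imset => A /=; rewrite -imset_comp. Qed.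

Section SelfEmbeddings.
Variables (U V : finType) (h : rel U) (g : rel V).

Lemma self_embedding_edges s :
  s \in embeddings h h -> [set s @: (A : {set U}) | A in edges h] = edges h.
Proof.
rewrite inE => /andP[/injectiveP injs sub]; apply/eqP.
by rewrite eqEcard sub (card_imset _ (imset_inj injs)) leqnn.
Qed.

Lemma self_embedding_onto s : s \in embeddings h h -> s @: [set: U] = [set: U].
Proof.
rewrite inE => /andP[/injectiveP injs _]; apply/eqP.
by rewrite eqEcard subsetT card_imset ?leqnn.
Qed.

Lemma self_embeddings_gt0 : 0 < #|embeddings h h|.
Proof.
apply/card_gt0P; exists [ffun u => u].
have idE (A : {set U}) : [ffun u => u] @: A = A.
  by rewrite -[RHS]imset_id; apply: eq_imset => u; rewrite ffunE.
rewrite inE; apply/andP; split; first by apply/injectiveP => x y; rewrite !ffunE.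
by apply/subsetP => _ /imsetP[A hA ->]; rewrite idE.
Qed.

Lemma embeddings_with_copy (f0 : {ffun U -> V}) : f0 \in embeddings h g ->
  [set f in embeddings h g | copy_of h f == copy_of h f0] =
  [set [ffun u => f0 (s u)] | s : {ffun U -> U} in embeddings h h].
Proof.
rewrite inE => /andP[/injectiveP inj0 sub0].
have compE (s : {ffun U -> U}) (A : {set U}) : [ffun u => f0 (s u)] @: A = f0 @: (s @: A).
  by rewrite -imset_comp; apply: eq_imset => u; rewrite ffunE.
apply/setP => f; apply/idP/imsetP => [|[s s_self ->]].
  rewrite !inE => /andP[/andP[/injectiveP injf subf] /eqP[e1 e2]].
  have preim u : exists w, f0 w == f u.
    have : f u \in f0 @: [set: U] by rewrite -e1 imset_f.
    by case/imsetP => w _ ->; exists w.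
  pose s : {ffun U -> U} := [ffun u => xchoose (preim u)].
  have sK u : f0 (s u) = f u by rewrite ffunE; apply/eqP/(xchooseP (preim u)).
  have fE : f = [ffun u => f0 (s u)] by apply/ffunP => u; rewrite ffunE sK.
  exists s => //; rewrite inE; apply/andP; split.
    by apply/injectiveP => x y /(congr1 f0); rewrite !sK => /injf.
  have sE : [set s @: (A : {set U}) | A in edges h] = edges h.
    apply: (imset_inj (imset_inj inj0)); rewrite -imset_edges_comp -e2 fE.
    by apply: eq_imset => A; apply: eq_imset => u; rewrite ffunE.
  by rewrite sE.
have edgesE : [set [ffun u => f0 (s u)] @: (A : {set U}) | A in edges h] =
              [set f0 @: (A : {set U}) | A in edges h].
  rewrite -{2}(self_embedding_edges s_self) -imset_edges_comp.
  by apply: eq_imset => A; apply: eq_imset => u; rewrite ffunE.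
rewrite !inE /copy_of edgesE compE (self_embedding_onto s_self) !eqxx sub0 !andbT.
move: s_self; rewrite inE => /andP[/injectiveP injs _].
by apply/injectiveP => x y; rewrite !ffunE => /inj0 /injs.
Qed.

Lemma card_embeddings : #|embeddings h g| = #|embeddings h h| * Nsub h g.
Proof.
rewrite /Nsub mulnC -sum_nat_const -sum1_card.
rewrite (partition_big (copy_of h) [in [set p | is_copy h g p]]); last first.
  by move=> f /copy_of_embedding; rewrite inE.
apply: eq_bigr => p; rewrite inE => /is_copy_embedding[f0 f0_emb ->].
rewrite sum1dep_card embeddings_with_copy // card_in_imset // => s1 s2 _ _ /ffunP E.
move: f0_emb; rewrite inE => /andP[/injectiveP inj0 _].
by apply/ffunP => u; move: (E u); rewrite !ffunE => /inj0.
Qed.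

End SelfEmbeddings.

Lemma leq_Nsub (U V : finType) (h : rel U) (g g' : rel V) :
  #|embeddings h g| <= #|embeddings h g'| -> Nsub h g <= Nsub h g'.
Proof.
by rewrite (card_embeddings h g) (card_embeddings h g') leq_pmul2l // self_embeddings_gt0.
Qed.

Lemma Nsub_eq0 (U V : finType) (h : rel U) (g : rel V) :
  (Nsub h g == 0) = (#|embeddings h g| == 0).
Proof.
by have := self_embeddings_gt0 h; rewrite (card_embeddings h g) muln_eq0 lt0n => /negPf->.
Qed.

Lemma eq_Nsub (U V : finType) (h : rel U) (g g' : rel V) : g =2 g' -> Nsub h g = Nsub h g'.
Proof.
move=> gg'; have edgesE : edges g = edges g'.
  apply/setP => A; apply/imset2P/imset2P => -[x y _];
    by rewrite !inE ?gg' => gxy ->; exists x y; rewrite ?inE ?gg'.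
by rewrite /Nsub /is_copy edgesE.
Qed.

Lemma eq_set2 (T : finType) (u v x y : T) :
  [set u; v] = [set x; y] -> (u, v) = (x, y) \/ (u, v) = (y, x).
Proof.
move=> E; have ux : u \in [set x; y] by rewrite -E set21.
have vx : v \in [set x; y] by rewrite -E set22.
have xu : x \in [set u; v] by rewrite E set21.
have yu : y \in [set u; v] by rewrite E set22.
move: ux vx xu yu; rewrite !inE.
by case/orP=> /eqP e1 /orP[]/eqP e2 /orP[]/eqP e3 /orP[]/eqP e4; subst; auto.
Qed.

Lemma embeddingE (U V : finType) (h : rel U) (g : rel V) (f : {ffun U -> V}) :
  symmetric g ->
  (f \in embeddings h g) =
  injectiveb f && [forall a, forall b, h a b ==> g (f a) (f b)].
Proof.
move=> gsym; rewrite inE; congr (_ && _); apply/subsetP/forallP.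
  move=> sub a; apply/forallP => b; apply/implyP => hab.
  have : f @: [set a; b] \in edges g by apply/sub/imset_f/imset2P; exists a b; rewrite ?inE.
  rewrite imsetU1 imset_set1 => /imset2P[x y _]; rewrite inE => gxy.
  by case/eq_set2 => -[-> ->]; rewrite // gsym.
move=> hom _ /imsetP[_ /imset2P[a b _ hab ->] ->].
rewrite imsetU1 imset_set1; apply/imset2P; exists (f a) (f b); rewrite ?inE //.
by move: hab; rewrite inE; apply/implyP/(forallP (hom a)).
Qed.

Lemma injectivebE (U V : finType) (f : {ffun U -> V}) :
  injectiveb f = [forall a, forall b, (f a == f b) ==> (a == b)].
Proof.
apply/injectiveP/forallP => [inj a|inj a b fab].
  by apply/forallP => b; apply/implyP => /eqP /inj ->.
by have := forallP (inj a) b; rewrite fab eqxx => /eqP.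
Qed.

Local Notation o3 k := (@Ordinal 3 k isT).
Local Notation o4 k := (@Ordinal 4 k isT).

Lemma ord3_ind (P : 'I_3 -> Prop) : P (o3 0) -> P (o3 1) -> P (o3 2) -> forall i, P i.
Proof. by move=> ? ? ? [[|[|[|k]]] ik] //; rewrite (bool_irrelevance ik isT). Qed.

Lemma ord4_ind (P : 'I_4 -> Prop) :
  P (o4 0) -> P (o4 1) -> P (o4 2) -> P (o4 3) -> forall i, P i.
Proof. by move=> ? ? ? ? [[|[|[|[|k]]]] ik] //; rewrite (bool_irrelevance ik isT). Qed.

Lemma forall_ord3 (R : 'I_3 -> bool) :
  [forall i, R i] = [&& R (o3 0), R (o3 1) & R (o3 2)].
Proof. by apply/forallP/and3P => [R_ | [? ? ?]]; [split; apply: R_ | apply: ord3_ind]. Qed.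

Lemma forall_ord4 (R : 'I_4 -> bool) :
  [forall i, R i] = [&& R (o4 0), R (o4 1), R (o4 2) & R (o4 3)].
Proof. by apply/forallP/and4P => [R_ | [? ? ? ?]]; [split; apply: R_ | apply: ord4_ind]. Qed.

Lemma eq_Ordinal n i j (ltin : i < n) (ltjn : j < n) :
  (Ordinal ltin == Ordinal ltjn) = eqn i j.
Proof. by []. Qed.

Section LabelledCopies.
Variable V : finType.

Lemma card_ffun_ord3 (Q : V -> V -> V -> bool) :
  #|[set f : {ffun 'I_3 -> V} | Q (f (o3 0)) (f (o3 1)) (f (o3 2))]| =
  \sum_x \sum_y \sum_z Q x y z.
Proof.
pose to_tuple (f : {ffun 'I_3 -> V}) := (f (o3 0), (f (o3 1), f (o3 2))).
pose of_tuple (t : V * (V * V)) := [ffun i : 'I_3 => nth t.1 [:: t.1; t.2.1; t.2.2] i].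
have to_tupleK : cancel to_tuple of_tuple.
  by move=> f; apply/ffunP; apply: ord3_ind; rewrite ffunE.
have of_tupleK : cancel of_tuple to_tuple by case=> x [y z]; rewrite /to_tuple !ffunE.
rewrite -(card_imset _ (can_inj to_tupleK)) (can2_imset_pre _ to_tupleK of_tupleK).
rewrite -sum1_card big_mkcond /=.
under [RHS]eq_bigr do rewrite pair_bigA.
rewrite pair_bigA; apply: eq_bigr => -[x [y z]] _.
by rewrite !inE !ffunE; case: (Q _ _ _).
Qed.

Lemma card_ffun_ord4 (Q : V -> V -> V -> V -> bool) :
  #|[set f : {ffun 'I_4 -> V} | Q (f (o4 0)) (f (o4 1)) (f (o4 2)) (f (o4 3))]| =
  \sum_x \sum_y \sum_z \sum_w Q x y z w.
Proof.
pose to_tuple (f : {ffun 'I_4 -> V}) := (f (o4 0), (f (o4 1), (f (o4 2), f (o4 3)))).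
pose of_tuple (t : V * (V * (V * V))) :=
  [ffun i : 'I_4 => nth t.1 [:: t.1; t.2.1; t.2.2.1; t.2.2.2] i].
have to_tupleK : cancel to_tuple of_tuple.
  by move=> f; apply/ffunP; apply: ord4_ind; rewrite ffunE.
have of_tupleK : cancel of_tuple to_tuple by case=> x [y [z w]]; rewrite /to_tuple !ffunE.
rewrite -(card_imset _ (can_inj to_tupleK)) (can2_imset_pre _ to_tupleK of_tupleK).
rewrite -sum1_card big_mkcond /=.
under [RHS]eq_bigr do under eq_bigr do rewrite pair_bigA.
under [RHS]eq_bigr do rewrite pair_bigA.
rewrite pair_bigA; apply: eq_bigr => -[x [y [z w]]] _.
by rewrite !inE !ffunE; case: (Q _ _ _ _).
Qed.

Variables (g : rel V) (gsym : symmetric g).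

Ltac case_atoms := repeat match goal with
  | |- context [?a == ?b] => case: (a == b)
  | |- context [g ?a ?b] => case: (g a b)
  end.

Lemma embeddings_P3E : #|embeddings P3 g| =
  \sum_x \sum_y \sum_z [&& uniq [:: x; y; z], g x y & g y z].
Proof.
rewrite -card_ffun_ord3; apply: eq_card => f.
rewrite [in RHS]inE embeddingE // injectivebE !forall_ord3 /P3 /= !eq_Ordinal /= !inE.
set x := f (o3 0); set y := f (o3 1); set z := f (o3 2).
by rewrite (gsym y x) (gsym z y) !eqxx (eq_sym y x) (eq_sym z x) (eq_sym z y); case_atoms.
Qed.

Lemma embeddings_P4E : #|embeddings P4 g| =
  \sum_x \sum_y \sum_z \sum_w [&& uniq [:: x; y; z; w], g x y, g y z & g z w].
Proof.
rewrite -card_ffun_ord4; apply: eq_card => f.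
rewrite [in RHS]inE embeddingE // injectivebE !forall_ord4 /P4 /= !eq_Ordinal /= !inE.
set x := f (o4 0); set y := f (o4 1); set z := f (o4 2); set w := f (o4 3).
rewrite (gsym y x) (gsym z y) (gsym w z) !eqxx.
rewrite (eq_sym y x) (eq_sym z x) (eq_sym w x) (eq_sym z y) (eq_sym w y) (eq_sym w z).
by case_atoms.
Qed.

Lemma embeddings_C4E : #|embeddings C4 g| =
  \sum_x \sum_y \sum_z \sum_w [&& uniq [:: x; y; z; w], g x y, g y z, g z w & g w x].
Proof.
rewrite -card_ffun_ord4; apply: eq_card => f.
rewrite [in RHS]inE embeddingE // injectivebE !forall_ord4 /C4 /= !eq_Ordinal /= !inE.
set x := f (o4 0); set y := f (o4 1); set z := f (o4 2); set w := f (o4 3).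
rewrite (gsym y x) (gsym z y) (gsym w z) (gsym x w) !eqxx.
rewrite (eq_sym y x) (eq_sym z x) (eq_sym w x) (eq_sym z y) (eq_sym w y) (eq_sym w z).
by case_atoms.
Qed.

Lemma embeddings_pawE : #|embeddings paw g| =
  \sum_x \sum_y \sum_z \sum_w [&& uniq [:: x; y; z; w], g x y, g x z, g y z & g x w].
Proof.
rewrite -card_ffun_ord4; apply: eq_card => f.
rewrite [in RHS]inE embeddingE // injectivebE !forall_ord4 /paw /= !eq_Ordinal /= !inE.
set x := f (o4 0); set y := f (o4 1); set z := f (o4 2); set w := f (o4 3).
rewrite (gsym y x) (gsym z x) (gsym z y) (gsym w x) !eqxx.
rewrite (eq_sym y x) (eq_sym z x) (eq_sym w x) (eq_sym z y) (eq_sym w y) (eq_sym w z).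
by case_atoms.
Qed.

End LabelledCopies.

Lemma half_cases n : exists2 k, n./2 = k & n = k.*2 \/ n = k.*2.+1.
Proof. by exists n./2 => //; have := odd_double_half n; case: odd => E; [right | left]; lia. Qed.

Lemma sqr_le_balanced_prod n : n ^ 2 <= 4 * (n./2 * (n - n./2)) + 1.
Proof. by have [k -> [] ->] := half_cases n; nia. Qed.

Lemma pred_prod_le_balanced p q n : p + q <= n -> 0 < p -> 0 < q ->
  p.-1 * q.-1 <= (n./2).-1 * (n - n./2).-1.
Proof. by have [k -> [] ->] := half_cases n; case: (leqP p k); nia. Qed.

Lemma cauchy_schwarz_sum (V : finType) (F : V -> nat) :
  (\sum_x F x) ^ 2 <= #|V| * \sum_x F x ^ 2.
Proof.
rewrite -(leq_pmul2l (isT : 0 < 2)) -mulnn big_distrlr /= big_distrr /=.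
apply: (@leq_trans (\sum_x \sum_y (F x ^ 2 + F y ^ 2))).
  by apply: leq_sum => x _; rewrite big_distrr; apply: leq_sum => y _; apply: nat_Cauchy.
rewrite mulnCA mul2n -addnn mulnDr.
under eq_bigr do rewrite big_split; rewrite big_split /=; apply: leq_add.
  by rewrite big_distrr; apply: leq_sum => x _; rewrite sum_nat_const cardE.
by rewrite exchange_big big_distrr; apply: leq_sum => y _; rewrite sum_nat_const cardE.
Qed.

Lemma leq_sum4_bool (V : finType) (P Q : V -> V -> V -> V -> bool) :
  (forall x y z w, P x y z w -> Q x y z w) ->
  \sum_x \sum_y \sum_z \sum_w P x y z w <= \sum_x \sum_y \sum_z \sum_w Q x y z w.
Proof. by move=> PQ; do 4!(apply: leq_sum => ? _); case: (boolP (P _ _ _ _)) => // /PQ->. Qed.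

Lemma sum4_bool_gt0 (V : finType) (P : V -> V -> V -> V -> bool) x y z w :
  P x y z w -> 0 < \sum_x \sum_y \sum_z \sum_w P x y z w.
Proof.
have term_le (F : V -> nat) a : F a <= \sum_b F b by rewrite (bigD1 a) //= leq_addr.
move=> Pxyzw; apply: leq_trans (term_le _ x); apply: leq_trans (term_le _ y).
by apply: leq_trans (term_le _ z); apply: leq_trans (term_le _ w); rewrite lt0b.
Qed.

Section Degrees.
Variables (V : finType) (g : rel V).

Definition deg x := #|[set y | g x y]|.

Lemma degE x : deg x = \sum_y g x y.
Proof. by rewrite /deg -sum1dep_card big_mkcond; apply: eq_bigr => y _; case: (g x y). Qed.

Lemma sum_adj_neq x y : \sum_z (g y z && (x != z)) = deg y - g y x.
Proof.
rewrite degE (bigD1 x) //= [in RHS](bigD1 x) //= eqxx andbF add0n addKn.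
by apply: eq_bigr => z; rewrite eq_sym => /negPf->; rewrite andbT.
Qed.

Hypothesis gsym : symmetric g.

Lemma sum_deg_sqr_le n : (forall x y, g x y -> deg x + deg y <= n) ->
  2 * \sum_x deg x ^ 2 <= n * \sum_x deg x.
Proof.
move=> deg_edge.
have sqrE : \sum_x deg x ^ 2 = \sum_x \sum_y g x y * deg x.
  by apply: eq_bigr => x _; rewrite -mulnn {1}degE big_distrl.
have sqrE' : \sum_x deg x ^ 2 = \sum_x \sum_y g x y * deg y.
  by rewrite sqrE exchange_big; apply: eq_bigr => x _; apply: eq_bigr => y _; rewrite gsym.
rewrite mul2n -addnn {1}sqrE sqrE' -big_split big_distrr /=.
apply: leq_sum => x _; rewrite -big_split [in X in _ <= X]degE big_distrr /=.
apply: leq_sum => y _; rewrite -mulnDr mulnC.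
by case: (boolP (g x y)) => [/deg_edge|_] /=; rewrite ?muln1 ?muln0.
Qed.

Hypothesis girr : irreflexive g.

Lemma embeddings_P3_deg : #|embeddings P3 g| = \sum_y deg y * (deg y).-1.
Proof.
rewrite embeddings_P3E // exchange_big; apply: eq_bigr => y _.
rewrite [LHS](eq_bigr (fun x => g y x * (deg y - g y x))); last first.
  move=> x _; rewrite -sum_adj_neq big_distrr; apply: eq_bigr => z _ /=.
  rewrite !inE (gsym x y); case gyx: (g y x); last by rewrite !andbF.
  case gyz: (g y z); last by rewrite !andbF.
  have xy : x != y by apply: contraTneq gyx => ->; rewrite girr.
  have yz : y != z by apply: contraTneq gyz => ->; rewrite girr.
  by rewrite (negPf xy) yz mul1n !andbT.
rewrite degE big_distrl /=; apply: eq_bigr => x _.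
by case: (g y x); rewrite ?subn1 ?mul0n.
Qed.

Definition nonbacktracking_walk x0 x1 x2 x3 := [&& g x0 x1, g x1 x2, g x2 x3, x0 != x2 & x1 != x3].

Lemma card_nonbacktracking_walks :
  \sum_x0 \sum_x1 \sum_x2 \sum_x3 nonbacktracking_walk x0 x1 x2 x3 =
  \sum_x1 \sum_x2 g x1 x2 * ((deg x1).-1 * (deg x2).-1).
Proof.
rewrite exchange_big; apply: eq_bigr => x1 _; rewrite exchange_big; apply: eq_bigr => x2 _.
case: (boolP (g x1 x2)) => [g12 | /negPf g12]; last first.
  rewrite mul0n big1 // => x0 _; rewrite big1 // => x3 _.
  by rewrite /nonbacktracking_walk g12 andbF.
have deg1E : (deg x1).-1 = \sum_x0 (g x1 x0 && (x2 != x0)).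
  by rewrite sum_adj_neq g12 subn1.
have deg2E : (deg x2).-1 = \sum_x3 (g x2 x3 && (x1 != x3)).
  by rewrite sum_adj_neq gsym g12 subn1.
rewrite mul1n deg1E deg2E big_distrl; apply: eq_bigr => x0 _; rewrite big_distrr.
apply: eq_bigr => x3 _; rewrite /nonbacktracking_walk g12 (gsym x0) (eq_sym x2).
by case: (g x1 x0) (x0 != x2) (g x2 x3) (x1 != x3) => [] [] [] [].
Qed.

Lemma embeddings_P4_le :
  #|embeddings P4 g| <= \sum_x0 \sum_x1 \sum_x2 \sum_x3 nonbacktracking_walk x0 x1 x2 x3.
Proof.
rewrite embeddings_P4E //; apply: leq_sum4_bool => x y z w.
rewrite /nonbacktracking_walk /= !inE.
case/and4P=> /and4P[/norP[_ /norP[xz _]] /norP[_ yw] _ _] -> -> ->.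
by rewrite xz yw.
Qed.

Lemma embeddings_C4_le :
  #|embeddings C4 g| <= \sum_x0 \sum_x1 \sum_x2 \sum_x3 nonbacktracking_walk x0 x1 x2 x3.
Proof.
rewrite embeddings_C4E //; apply: leq_sum4_bool => x y z w.
rewrite /nonbacktracking_walk /= !inE.
case/and5P=> /and4P[/norP[_ /norP[xz _]] /norP[_ yw] _ _] -> -> -> _.
by rewrite xz yw.
Qed.

Section EdgeDegreeBound.
Local Notation n := #|V|.
Hypothesis deg_edge : forall x y, g x y -> deg x + deg y <= n.

Lemma sum_deg_le_balanced : \sum_x deg x <= 2 * (n./2 * (n - n./2)).
Proof.
have sqr_le := sum_deg_sqr_le deg_edge; have cs := cauchy_schwarz_sum deg.
have := sqr_le_balanced_prod n.
case: (posnP (\sum_x deg x)) => [-> // | D_gt0]; nia.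
Qed.

Lemma sum_deg_pred_le : \sum_y deg y * (deg y).-1 <= (n - 2) * (n./2 * (n - n./2)).
Proof.
have sqrE : \sum_y deg y ^ 2 = \sum_y deg y * (deg y).-1 + \sum_y deg y.
  by rewrite -big_split; apply: eq_bigr => y _; case: (deg y) => [|k] //=; nia.
have := sum_deg_sqr_le deg_edge; rewrite sqrE.
have := leq_mul (leqnn (n - 2)) sum_deg_le_balanced.
nia.
Qed.

Lemma nonbacktracking_walks_le : \sum_x0 \sum_x1 \sum_x2 \sum_x3 nonbacktracking_walk x0 x1 x2 x3 <=
  2 * (n./2 * (n - n./2)) * ((n./2).-1 * (n - n./2).-1).
Proof.
rewrite card_nonbacktracking_walks; apply: leq_trans (leq_mul sum_deg_le_balanced (leqnn _)).
rewrite big_distrl; apply: leq_sum => x1 _; rewrite [in X in _ <= X]degE big_distrl.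
apply: leq_sum => x2 _; case: (boolP (g x1 x2)) => // g12; rewrite /= !mul1n.
apply: pred_prod_le_balanced; first exact: deg_edge.
  by apply/card_gt0P; exists x2; rewrite inE.
by apply/card_gt0P; exists x1; rewrite inE gsym.
Qed.

End EdgeDegreeBound.

End Degrees.

Section PawFree.
Variables (V : finType) (g : rel V).
Hypotheses (gsym : symmetric g) (girr : irreflexive g).
Hypothesis pawfree : #|embeddings paw g| = 0.

Lemma pawfree_triangle_deg x y z : g x y -> g x z -> g y z -> deg g x <= 2.
Proof.
move=> gxy gxz gyz; rewrite leqNgt; apply/negP => deg_gt2.
have [w] : exists w, w \in [set w | g x w] :\ y :\ z.
  apply/card_gt0P; move: deg_gt2; rewrite /deg (cardsD1 y) (cardsD1 z (_ :\ y)).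
  by case: (y \in _); case: (z \in _) => /=; lia.
rewrite !inE => /and3P[wz wy gxw].
have neq a b : g a b -> a != b by apply: contraTneq => ->; rewrite girr.
suff : 0 < #|embeddings paw g| by rewrite pawfree.
rewrite embeddings_pawE //; apply: (sum4_bool_gt0 (x := x) (y := y) (z := z) (w := w)).
rewrite /= !inE (eq_sym y w) (eq_sym z w) (negPf wy) (negPf wz).
by rewrite !(negPf (neq _ _ _)) // gxy gxz gyz gxw.
Qed.

Lemma pawfree_deg_edge : 4 <= #|V| -> forall x y, g x y -> deg g x + deg g y <= #|V|.
Proof.
move=> V_ge4 x y gxy.
case: (pickP (fun w => g x w && g y w)) => [w /andP[gxw gyw] | no_common].
  have deg_x := pawfree_triangle_deg gxy gxw gyw.
  have deg_y : deg g y <= 2 by apply: pawfree_triangle_deg gyw gxw; rewrite gsym.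
  exact: leq_trans (leq_add deg_x deg_y) V_ge4.
have disjoint_nbhds : [set w | g x w] :&: [set w | g y w] = set0.
  by apply/setP => w; rewrite !inE no_common.
by rewrite /deg -cardsUI disjoint_nbhds cards0 addn0 max_card.
Qed.

End PawFree.

Section CompleteBipartite.
Variables (V : finType) (s : pred V).

Definition bip : rel V := fun x y => s x != s y.

Local Notation a := #|[set x | s x]|.
Local Notation b := #|[set x | ~~ s x]|.

Lemma bip_sym : symmetric bip.
Proof. by move=> x y; rewrite /bip eq_sym. Qed.

Lemma bip_irr : irreflexive bip.
Proof. by move=> x; rewrite /bip eqxx. Qed.

Lemma deg_bip x : deg bip x = if s x then b else a.
Proof. by rewrite /deg /bip; case: (s x); apply: eq_card => y; rewrite !inE; case: (s y). Qed.

Lemma sum_deg_bip : \sum_x deg bip x = 2 * (a * b).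
Proof.
rewrite (bigID s) /= (eq_bigr (fun=> b)) => [|x sx]; last by rewrite deg_bip sx.
rewrite [X in _ + X](eq_bigr (fun=> a)) => [|x /negPf sx]; last by rewrite deg_bip sx.
by rewrite !sum_nat_cond_const; lia.
Qed.

Lemma cherries_bip : \sum_y deg bip y * (deg bip y).-1 = a * (b * b.-1) + b * (a * a.-1).
Proof.
rewrite (bigID s) /= (eq_bigr (fun=> b * b.-1)) => [|x sx]; last by rewrite deg_bip sx.
rewrite [X in _ + X](eq_bigr (fun=> a * a.-1)) => [|x /negPf sx]; last by rewrite deg_bip sx.
by rewrite !sum_nat_cond_const.
Qed.

Lemma nonbacktracking_walks_bip :
  \sum_x0 \sum_x1 \sum_x2 \sum_x3 nonbacktracking_walk bip x0 x1 x2 x3 =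
  2 * (a * b) * (a.-1 * b.-1).
Proof.
rewrite (card_nonbacktracking_walks bip_sym) -sum_deg_bip big_distrl; apply: eq_bigr => x1 _.
rewrite [in RHS]degE big_distrl; apply: eq_bigr => x2 _.
by rewrite /bip !deg_bip; case: (s x1); case: (s x2); rewrite /= ?mul1n ?mul0n // mulnC.
Qed.

Lemma bip_neq x y : bip x y -> x != y.
Proof. by apply: contraTneq => ->; rewrite bip_irr. Qed.

Lemma bip_closed_walk x y z w : bip x y -> bip y z -> bip z w -> bip w x.
Proof. by rewrite /bip; case: (s x); case: (s y); case: (s z); case: (s w). Qed.

Lemma bip_P4E x y z w :
  [&& uniq [:: x; y; z; w], bip x y, bip y z & bip z w] = nonbacktracking_walk bip x y z w.
Proof.
rewrite /nonbacktracking_walk /= !inE; apply/idP/idP.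
  by case/and4P=> /and4P[/norP[_ /norP[-> _]] /norP[_ ->] _ _] -> -> ->.
case/and5P=> bxy byz bzw xz yw.
have xw : x != w by rewrite eq_sym; apply: bip_neq (bip_closed_walk bxy byz bzw).
rewrite bxy byz bzw (negPf (bip_neq bxy)) (negPf (bip_neq byz)) (bip_neq bzw).
by rewrite (negPf xz) (negPf xw) (negPf yw).
Qed.

Lemma embeddings_P4_bip :
  #|embeddings P4 bip| = \sum_x0 \sum_x1 \sum_x2 \sum_x3 nonbacktracking_walk bip x0 x1 x2 x3.
Proof. by rewrite (embeddings_P4E bip_sym); do 4!(apply: eq_bigr => ? _); rewrite bip_P4E. Qed.

Lemma embeddings_C4_bip :
  #|embeddings C4 bip| = \sum_x0 \sum_x1 \sum_x2 \sum_x3 nonbacktracking_walk bip x0 x1 x2 x3.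
Proof.
rewrite (embeddings_C4E bip_sym); apply: eq_bigr => x _; apply: eq_bigr => y _.
apply: eq_bigr => z _; apply: eq_bigr => w _; rewrite -bip_P4E.
case: (boolP (bip x y)) => bxy; case: (boolP (bip y z)) => byz; rewrite ?andbF //=.
by case: (boolP (bip z w)) => bzw; rewrite ?andbF ?(bip_closed_walk bxy byz bzw).
Qed.

Lemma embeddings_paw_bip : #|embeddings paw bip| = 0.
Proof.
rewrite (embeddings_pawE bip_sym) big1 // => x _; rewrite big1 // => y _.
rewrite big1 // => z _; rewrite big1 // => w _.
by rewrite /bip; case: (s x); case: (s y); case: (s z); rewrite !andbF.
Qed.

End CompleteBipartite.

Section PawFreeVersusBipartite.
Variables (V : finType) (g : rel V) (s : pred V).
Hypotheses (gsym : symmetric g) (girr : irreflexive g).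
Hypothesis pawfree : #|embeddings paw g| = 0.
Local Notation n := #|V|.
Hypothesis n_ge4 : 4 <= n.
Hypothesis card_s : #|[set x | s x]| = n./2.

Let deg_edge := pawfree_deg_edge gsym girr pawfree n_ge4.

Lemma card_not_s : #|[set x | ~~ s x]| = n - n./2.
Proof.
have <- : ~: [set x | s x] = [set x | ~~ s x] by apply/setP => x; rewrite !inE.
by have := cardsC [set x | s x]; rewrite card_s; lia.
Qed.

Lemma embeddings_P3_le_bip : #|embeddings P3 g| <= #|embeddings P3 (bip s)|.
Proof.
rewrite (embeddings_P3_deg gsym girr) (embeddings_P3_deg (@bip_sym _ s) (@bip_irr _ s)).
rewrite cherries_bip card_s card_not_s; apply: leq_trans (sum_deg_pred_le gsym deg_edge) _.
have cherriesE p q : (p + q - 2) * (p * q) = p * (q * q.-1) + q * (p * p.-1).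
  by case: p => [|p]; case: q => [|q]; rewrite ?muln0 ?mul0n //=; nia.
by rewrite -cherriesE subnKC // -divn2 leq_div.
Qed.

Lemma embeddings_P4_le_bip : #|embeddings P4 g| <= #|embeddings P4 (bip s)|.
Proof.
rewrite embeddings_P4_bip nonbacktracking_walks_bip card_s card_not_s.
exact: leq_trans (embeddings_P4_le gsym) (nonbacktracking_walks_le gsym deg_edge).
Qed.

Lemma embeddings_C4_le_bip : #|embeddings C4 g| <= #|embeddings C4 (bip s)|.
Proof.
rewrite embeddings_C4_bip nonbacktracking_walks_bip card_s card_not_s.
exact: leq_trans (embeddings_C4_le gsym) (nonbacktracking_walks_le gsym deg_edge).
Qed.

End PawFreeVersusBipartite.

Lemma simpleb_sym n (G : {ffun 'I_n * 'I_n -> bool}) : simpleb G -> symmetric (Defs.grel G).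
Proof. by case/andP=> /forallP sym _ x y; apply/eqP/(forallP (sym x)). Qed.

Lemma simpleb_irr n (G : {ffun 'I_n * 'I_n -> bool}) : simpleb G -> irreflexive (Defs.grel G).
Proof. by case/andP=> _ /forallP irr x; apply: negbTE (irr x). Qed.

Lemma T2E n : T2 n = bip (fun i : 'I_n => i < n./2).
Proof. by []. Qed.

Lemma card_ord_lt n m : m <= n -> #|[set i : 'I_n | i < m]| = m.
Proof.
move=> le_mn; have -> : [set i : 'I_n | i < m] = widen_ord le_mn @: [set: 'I_m].
  apply/setP => i; rewrite inE; apply/idP/imsetP => [lt_im | [j _ ->]].
    by exists (Ordinal lt_im) => //; apply: val_inj.
  exact: ltn_ord j.
by rewrite card_imset ?cardsT ?card_ord // => j k /(congr1 val) eq_jk; apply: val_inj.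
Qed.

Lemma exN_paw_eq_T2 (U : finType) (h : rel U) n :
  (forall g : rel 'I_n, symmetric g -> irreflexive g -> #|embeddings paw g| = 0 ->
     #|embeddings h g| <= #|embeddings h (T2 n)|) ->
  exN n h paw = Nsub h (T2 n).
Proof.
move=> le_T2; apply/eqP; rewrite eqn_leq; apply/andP; split.
  apply/bigmax_leqP => G /andP[simple_G pawfree_G]; apply/leq_Nsub/le_T2.
  - exact: simpleb_sym.
  - exact: simpleb_irr.
  - by apply/eqP; rewrite -Nsub_eq0.
pose GT := [ffun p : 'I_n * 'I_n => T2 n p.1 p.2].
have GTE : Defs.grel GT =2 T2 n by move=> x y; rewrite /Defs.grel ffunE.
rewrite -(eq_Nsub h GTE); apply: leq_bigmax_cond.
rewrite (eq_Nsub paw GTE) Nsub_eq0 T2E embeddings_paw_bip eqxx andbT.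
apply/andP; split; apply/forallP => x; rewrite ?ffunE /= ?T2E ?bip_irr //.
by apply/forallP => y; rewrite !ffunE /= T2E bip_sym.
Qed.

Theorem corollary3p15 :
  (exists n0, forall n, n0 <= n -> exN n P3 paw = Nsub P3 (T2 n)) /\
  (exists n0, forall n, n0 <= n -> exN n P4 paw = Nsub P4 (T2 n)) /\
  (exists n0, forall n, n0 <= n -> exN n C4 paw = Nsub C4 (T2 n)).
Proof.
have T2_part n : #|[set i : 'I_n | i < n./2]| = #|'I_n|./2.
  by rewrite card_ord card_ord_lt // -divn2 leq_div.
split; [|split]; exists 4 => n n_ge4; apply: exN_paw_eq_T2 => g gsym girr pawfree;
  rewrite -(card_ord n) in n_ge4; rewrite T2E.
- exact: embeddings_P3_le_bip gsym girr pawfree n_ge4 (T2_part n).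
- exact: embeddings_P4_le_bip gsym girr pawfree n_ge4 (T2_part n).
- exact: embeddings_C4_le_bip gsym girr pawfree n_ge4 (T2_part n).
Qed.
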